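(* Let $(x,y,z)(\eta_1)$ be a trajectory of system (S2) such that there is $\eta_{1,*}\in\mathbb{R}$ with $x(\eta_{1,*})>0$, $z(\eta_{1,*})>0$ and $$-\frac{\sigma+2}{p-m}<y(\eta_1)<0\qquad\text{for all }\eta_1>\eta_{1,*}.$$ Then, in the variables $(X,Y,Z)=(1/x,y/x,z/x)$, the trajectory converges as $\eta_1\to\infty$ either to $P_1=(0,0,0)$ or to $P_{\gamma_0}=(0,0,\gamma_0)$, where $\gamma_0=\frac{1}{\alpha(p-1)}$.
   Context: Let $N\geq1$, $m>1$, $\sigma>0$, $p>m$, $L=\sigma(m-1)+2(p-1)$, $\alpha=(\sigma+2)/L$. System (S2) is $$\dot x=x(2-(m-1)y),\quad \dot y=-x-(N-2)y+z-my^2-\tfrac{p-m}{\sigma+2}xy,\quad \dot z=z(\sigma+2+(p-m)y),$$ and under $X=1/x$, $Y=y/x$, $Z=z/x$ it is equivalent (up to time change) to system (S1): $$\dot X=X[(m-1)Y-2X],\quad \dot Y=-Y^2-\tfrac{p-m}{\sigma+2}Y-X-NXY+XZ,\quad \dot Z=Z[(p-1)Y+\sigma X].$$ *)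

From Stdlib Require Import Reals.
From Coquelicot Require Import Coquelicot.
Open Scope R_scope.

Definition S2_x (m : R) (x y z : R) : R := x * (2 - (m - 1) * y).
Definition S2_y (N m sigma p : R) (x y z : R) : R :=
  - x - (N - 2) * y + z - m * y ^ 2 - (p - m) / (sigma + 2) * x * y.
Definition S2_z (m sigma p : R) (x y z : R) : R :=
  z * (sigma + 2 + (p - m) * y).

Definition solves_S2_at (N m sigma p : R) (x y z : R -> R) (t : R) : Prop :=
  is_derive x t (S2_x m (x t) (y t) (z t)) /\
  is_derive y t (S2_y N m sigma p (x t) (y t) (z t)) /\
  is_derive z t (S2_z m sigma p (x t) (y t) (z t)).

Definition L_const (m sigma p : R) : R := sigma * (m - 1) + 2 * (p - 1).
Definition alpha_const (m sigma p : R) : R := (sigma + 2) / L_const m sigma p.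
Definition gamma0 (m sigma p : R) : R := 1 / (alpha_const m sigma p * (p - 1)).

From Stdlib Require Import Reals Lra Psatz Classical.
From Coquelicot Require Import Coquelicot.
Open Scope R_scope.

(** Along the trajectory [y] stays in [(-(sigma+2)/(p-m), 0)], so [x' >= 2 x]
    forces [x -> oo], whence [X = 1/x -> 0] and [Y = y/x -> 0].  The ratio
    [Z = z/x] satisfies [Z' = Z (sigma + (p-1) y)].  With [c = (p-m)/(sigma+2)],
    the defect [G = Z - 1 - c y] obeys [G' = -(c x - sigma - (p-1) y) G + K]
    with [K] bounded, so the damping [c x -> oo] drives [G -> 0].  Since
    [sigma = k (1 - gamma0)] for [k = (p-1)/c], this turns the equation for [Z]
    into the perturbed logistic equation [Z' = k Z (Z - gamma0 - G)]: either [Z]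
    drops below [gamma0] once [G] is small, and then decays to [0], or it tends
    to [gamma0] (it cannot stay above [gamma0], being bounded by [1 + G]). *)

Lemma is_lim_p_infty_Rabs (f : R -> R) (l : R) :
  is_lim f p_infty l <->
  forall eps, 0 < eps -> exists T, forall t, T <= t -> Rabs (f t - l) < eps.
Proof.
  rewrite <- is_lim_spec; split.
  - intros H eps Heps. destruct (H (mkposreal eps Heps)) as [T HT].
    exists (T + 1). intros t Ht. apply HT. lra.
  - intros H eps. destruct (H eps (cond_pos eps)) as [T HT].
    exists T. intros t Ht. apply HT. lra.
Qed.

Lemma is_lim_p_infty_p_infty (f : R -> R) :
  is_lim f p_infty p_infty <-> forall B, exists T, forall t, T <= t -> B < f t.
Proof.
  rewrite <- is_lim_spec; split.
  - intros H B. destruct (H B) as [T HT]. exists (T + 1). intros t Ht. apply HT. lra.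
  - intros H B. destruct (H B) as [T HT]. exists T. intros t Ht. apply HT. lra.
Qed.

Lemma continuity_pt_is_derive (f : R -> R) (t l : R) :
  is_derive f t l -> continuity_pt f t.
Proof.
  intros H. apply derivable_continuous_pt. exists l. now apply is_derive_Reals.
Qed.

Lemma MVT_is_derive (f df : R -> R) (a b : R) : a < b ->
  (forall t, a <= t <= b -> is_derive f t (df t)) ->
  exists c, a < c < b /\ f b - f a = df c * (b - a).
Proof.
  intros Hab Hd. destruct (MVT_cor2 f df a b Hab) as [c [Hc1 Hc2]].
  - intros c Hc. now apply is_derive_Reals, Hd.
  - now exists c.
Qed.

Lemma affine_le_of_derive_ge (f df : R -> R) (a b d : R) : a <= b ->
  (forall t, a <= t <= b -> is_derive f t (df t)) ->
  (forall t, a < t < b -> d <= df t) ->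
  f a + d * (b - a) <= f b.
Proof.
  intros Hab Hd Hge. destruct (Req_dec a b) as [<-|Hne]; [lra|].
  destruct (MVT_is_derive f df a b) as [c [Hc Heq]]; [lra|exact Hd|].
  pose proof (Hge c Hc). nra.
Qed.

Lemma le_affine_of_derive_le (f df : R -> R) (a b d : R) : a <= b ->
  (forall t, a <= t <= b -> is_derive f t (df t)) ->
  (forall t, a < t < b -> df t <= d) ->
  f b <= f a + d * (b - a).
Proof.
  intros Hab Hd Hle. destruct (Req_dec a b) as [<-|Hne]; [lra|].
  destruct (MVT_is_derive f df a b) as [c [Hc Heq]]; [lra|exact Hd|].
  pose proof (Hle c Hc). nra.
Qed.

Lemma continuity_pt_lt_near (f : R -> R) (s th : R) :
  continuity_pt f s -> f s < th ->
  exists e, 0 < e /\ forall u, Rabs (u - s) < e -> f u < th.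
Proof.
  intros Hc Hlt.
  destruct (proj1 (continuity_pt_locally f s) Hc (mkposreal (th - f s) ltac:(lra)))
    as [e He].
  exists e. split; [apply cond_pos|]. intros u Hu.
  specialize (He u Hu). simpl in He. apply Rabs_def2 in He. lra.
Qed.

Lemma first_crossing (f : R -> R) (a b th : R) : a < b ->
  (forall t, a <= t <= b -> continuity_pt f t) -> f a < th -> th <= f b ->
  exists s, a < s <= b /\ f s = th /\ forall r, a <= r < s -> f r < th.
Proof.
  intros Hab Hc Ha Hb.
  set (E t := a <= t <= b /\ forall r, a <= r <= t -> f r < th).
  assert (Ea : E a) by (split; [lra| intros r Hr; now replace r with a by lra]).
  destruct (completeness E) as [s [Hub Hlub]].
  { exists b. intros t [Ht _]. lra. }
  { now exists a. }
  assert (Has : a <= s) by now apply Hub.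
  assert (Hsb : s <= b) by (apply Hlub; intros t [Ht _]; lra).
  assert (Hbelow : forall r, a <= r < s -> f r < th).
  { intros r Hr. apply NNPP. intros Hn. assert (s <= r); [|lra].
    apply Hlub. intros t [Ht Hft]. apply Rnot_lt_le. intros Hrt. apply Hn, Hft. lra. }
  assert (Hfs_ge : th <= f s).
  { apply Rnot_lt_le. intros Hlt.
    destruct (continuity_pt_lt_near f s th (Hc s (conj Has Hsb)) Hlt) as [e [He Hnear]].
    destruct (Req_dec s b) as [->|Hne]; [lra|].
    set (t := Rmin b (s + e / 2)).
    assert (Ht : s < t <= s + e / 2) by (split; [apply Rmin_glb_lt|apply Rmin_r]; lra).
    assert (E t).
    { split; [split; [lra|apply Rmin_l]|]. intros r Hr.
      destruct (Rlt_le_dec r s); [apply Hbelow; lra|].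
      apply Hnear, Rabs_def1; lra. }
    apply Hub in H. lra. }
  assert (Has' : a < s) by (destruct (Req_dec a s) as [<-|]; lra).
  assert (Hfs_le : f s <= th).
  { apply Rnot_lt_le. intros Hlt.
    destruct (continuity_pt_lt_near (fun u => - f u) s (- th)) as [e [He Hnear]].
    { now apply continuity_pt_opp, Hc. }
    { lra. }
    set (r := Rmax a (s - e / 2)).
    assert (Hr : s - e / 2 <= r < s) by (split; [apply Rmax_r|apply Rmax_lub_lt]; lra).
    pose proof (Hbelow r (conj (Rmax_l _ _) (proj2 Hr))).
    assert (- f r < - th) by (apply Hnear, Rabs_def1; lra). lra. }
  exists s. repeat split; auto; lra.
Qed.

Lemma is_derive_neg_left (f : R -> R) (s d : R) : is_derive f s d -> d < 0 ->
  exists e, 0 < e /\ forall u, s - e < u < s -> f s < f u.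
Proof.
  intros Hd Hneg. apply is_derive_Reals in Hd.
  destruct (Hd (- d / 2) ltac:(lra)) as [e He].
  exists e. split; [apply cond_pos|]. intros u Hu.
  assert (Hh : u - s <> 0) by lra.
  assert (Habs : Rabs (u - s) < e) by (apply Rabs_def1; lra).
  specialize (He (u - s) Hh Habs). replace (s + (u - s)) with u in He by ring.
  apply Rabs_def2 in He.
  assert (Hq : f u - f s = (f u - f s) / (u - s) * (u - s)) by (field; lra).
  nra.
Qed.

Lemma stays_below (f df : R -> R) (a th : R) :
  (forall t, a <= t -> is_derive f t (df t)) ->
  (forall t, a <= t -> f t = th -> df t < 0) ->
  forall t0, a <= t0 -> f t0 < th -> forall t, t0 <= t -> f t < th.
Proof.
  intros Hd Hcross t0 Ht0 Hf0 t Ht. apply Rnot_le_lt. intros Hge.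
  assert (Ht0t : t0 < t) by (destruct (Req_dec t0 t) as [<-|]; lra).
  destruct (first_crossing f t0 t th Ht0t) as [s [Hs [Hfs Hbefore]]]; auto.
  { intros u Hu. apply (continuity_pt_is_derive f u (df u)), Hd. lra. }
  destruct (is_derive_neg_left f s (df s)) as [e [He Hleft]].
  { apply Hd. lra. }
  { apply Hcross; lra. }
  set (u := Rmax t0 (s - e / 2)).
  assert (Hu : s - e / 2 <= u < s) by (split; [apply Rmax_r|apply Rmax_lub_lt]; lra).
  pose proof (Hleft u ltac:(lra)). pose proof (Hbefore u (conj (Rmax_l _ _) (proj2 Hu))).
  lra.
Qed.

Lemma stays_above (f df : R -> R) (a th : R) :
  (forall t, a <= t -> is_derive f t (df t)) ->
  (forall t, a <= t -> f t = th -> 0 < df t) ->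
  forall t0, a <= t0 -> th < f t0 -> forall t, t0 <= t -> th < f t.
Proof.
  intros Hd Hcross t0 Ht0 Hf0 t Ht.
  enough (- f t < - th) by lra.
  apply (stays_below (fun u => - f u) (fun u => - df u) a (- th)) with t0; auto; try lra.
  - intros u Hu. apply (is_derive_opp f u (df u)), Hd, Hu.
  - intros u Hu Hfu. enough (0 < df u) by lra. apply Hcross; auto. lra.
Qed.

Lemma eventually_below (f df : R -> R) (a th d : R) : 0 < d ->
  (forall t, a <= t -> is_derive f t (df t)) ->
  (forall t, a <= t -> th <= f t -> df t <= - d) ->
  exists T, forall t, T <= t -> f t < th.
Proof.
  intros Hpos Hd Hdecr.
  set (T := a + (Rabs (f a - th) + 1) / d).
  assert (HTa : (T - a) * d = Rabs (f a - th) + 1) by (unfold T; field; lra).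
  assert (HaT : a <= T) by (pose proof (Rabs_pos (f a - th)); nra).
  assert (Hdrop : exists t0, a <= t0 <= T /\ f t0 < th).
  { apply NNPP. intros Hn.
    assert (Habove : forall t, a <= t <= T -> th <= f t).
    { intros t Ht. apply Rnot_lt_le. intros Hlt. apply Hn. now exists t. }
    pose proof (Habove T ltac:(lra)). pose proof (Rle_abs (f a - th)).
    enough (f T <= f a + - d * (T - a)) by nra.
    apply (le_affine_of_derive_le f df); auto.
    - intros t Ht. apply Hd. lra.
    - intros t Ht. apply Hdecr, Habove; lra. }
  destruct Hdrop as [t0 [Ht0 Hf0]].
  exists T. intros t Ht. apply (stays_below f df a th Hd) with t0; try lra.
  intros u Hu Hfu. pose proof (Hdecr u Hu ltac:(lra)). lra.
Qed.

Lemma pos_of_is_derive_mul (f g : R -> R) (a : R) :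
  (forall t, a <= t -> is_derive f t (f t * g t)) ->
  (forall t, a < t -> 0 <= g t) -> 0 < f a ->
  forall t, a <= t -> 0 < f t.
Proof.
  intros Hd Hg Ha t Ht. apply Rnot_le_lt. intros Hle.
  assert (Hat : a < t) by (destruct (Req_dec a t) as [<-|]; lra).
  destruct (first_crossing (fun u => - f u) a t 0 Hat) as [s [Hs [Hfs Hbefore]]];
    try lra.
  { intros u Hu. apply continuity_pt_opp, (continuity_pt_is_derive f u (f u * g u)), Hd.
    lra. }
  destruct (MVT_is_derive f (fun u => f u * g u) a s) as [c [Hc Heq]]; [lra| |].
  { intros u Hu. apply Hd. lra. }
  pose proof (Hbefore c ltac:(lra)). pose proof (Hg c ltac:(lra)).
  assert (0 <= f c * g c * (s - a)) by (apply Rmult_le_pos; [apply Rmult_le_pos|]; lra).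
  lra.
Qed.

Lemma is_lim_p_infty_of_derive_ge (f df : R -> R) (a d : R) : 0 < d ->
  (forall t, a <= t -> is_derive f t (df t)) ->
  (forall t, a < t -> d <= df t) ->
  is_lim f p_infty p_infty.
Proof.
  intros Hpos Hd Hge. apply is_lim_p_infty_p_infty. intros B.
  exists (a + Rabs (B - f a) / d + 1). intros t Ht.
  assert (Hgrow : f a + d * (t - a) <= f t).
  { apply (affine_le_of_derive_ge f df).
    - pose proof (Rabs_pos (B - f a)). assert (0 <= Rabs (B - f a) / d) by
        (apply Rdiv_le_0_compat; lra). lra.
    - intros u Hu. apply Hd. lra.
    - intros u Hu. apply Hge. lra. }
  assert (E : d * (Rabs (B - f a) / d) = Rabs (B - f a)) by (field; lra).
  pose proof (Rle_abs (B - f a)). nra.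
Qed.

Lemma is_lim_div_p_infty (g f : R -> R) (B : R) :
  (exists T, forall t, T <= t -> Rabs (g t) <= B) ->
  is_lim f p_infty p_infty ->
  is_lim (fun t => g t / f t) p_infty 0.
Proof.
  intros [T1 Hg] Hf. rewrite is_lim_p_infty_p_infty in Hf.
  apply is_lim_p_infty_Rabs. intros eps Heps.
  destruct (Hf ((Rabs B + 1) / eps)) as [T2 HT2].
  exists (Rmax T1 T2). intros t Ht.
  pose proof (Hg t (Rle_trans _ _ _ (Rmax_l _ _) Ht)) as Hgt.
  pose proof (HT2 t (Rle_trans _ _ _ (Rmax_r _ _) Ht)) as Hft.
  assert (HB : 0 < (Rabs B + 1) / eps)
    by (apply Rdiv_lt_0_compat; pose proof (Rabs_pos B); lra).
  assert (E : (Rabs B + 1) / eps * eps = Rabs B + 1) by (field; lra).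
  rewrite Rminus_0_r, Rabs_div, (Rabs_pos_eq (f t)) by lra.
  apply Rlt_div_l; [lra|]. pose proof (Rle_abs B). nra.
Qed.

Lemma is_lim_0_of_damped (f A K : R -> R) (a M : R) :
  (forall t, a <= t -> is_derive f t (- A t * f t + K t)) ->
  (forall t, a < t -> Rabs (K t) <= M) ->
  is_lim A p_infty p_infty ->
  is_lim f p_infty 0.
Proof.
  intros Hd HK HA. rewrite is_lim_p_infty_p_infty in HA.
  apply is_lim_p_infty_Rabs. intros eps Heps.
  destruct (HA ((Rabs M + 1) / eps)) as [T1 HT1].
  set (T := Rmax (a + 1) T1).
  assert (HaT : a + 1 <= T) by apply Rmax_l.
  assert (HT1T : T1 <= T) by apply Rmax_r.
  (* the energy [f^2] decreases at rate at least [2 eps] while [|f| >= eps] *)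
  destruct (eventually_below (fun t => f t ^ 2)
              (fun t => INR 2 * (- A t * f t + K t) * f t ^ 1) T (eps ^ 2) (2 * eps))
    as [T2 HT2]; [lra| | |].
  - intros t Ht. apply is_derive_pow, Hd. lra.
  - intros t Ht Hge. simpl INR. rewrite pow_1.
    set (g := Rabs (f t)).
    assert (Hg : eps <= g).
    { unfold g. rewrite <- (Rabs_pos_eq eps) by lra. apply Rsqr_le_abs_0.
      unfold Rsqr. simpl in Hge. lra. }
    assert (HAt : (Rabs M + 1) / eps < A t) by (apply HT1; lra).
    assert (E : (Rabs M + 1) / eps * eps = Rabs M + 1) by (field; lra).
    assert (HAg : Rabs M + 1 <= A t * g).
    { assert (0 < (Rabs M + 1) / eps)
        by (apply Rdiv_lt_0_compat; pose proof (Rabs_pos M); lra).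
      assert (A t * eps <= A t * g) by (apply Rmult_le_compat_l; lra).
      nra. }
    assert (Hff : f t * f t = g * g).
    { unfold g. rewrite <- Rabs_mult, Rabs_pos_eq; [reflexivity|apply Rle_0_sqr]. }
    assert (HKf : K t * f t <= Rabs M * g).
    { apply Rle_trans with (Rabs (K t * f t)); [apply Rle_abs|].
      rewrite Rabs_mult. apply Rmult_le_compat_r; [apply Rabs_pos|].
      apply Rle_trans with M; [apply HK; lra|apply Rle_abs]. }
    assert ((Rabs M + 1) * g <= A t * g * g) by (apply Rmult_le_compat_r; lra).
    assert (E2 : A t * f t * f t = A t * g * g) by (rewrite Rmult_assoc, Hff; ring).
    lra.
  - exists (Rmax T T2). intros t Ht. rewrite Rminus_0_r.
    pose proof (HT2 t (Rle_trans _ _ _ (Rmax_r _ _) Ht)) as Hsq.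
    assert (Hlt : Rsqr (f t) < Rsqr eps) by (unfold Rsqr; simpl in Hsq; lra).
    apply Rsqr_lt_abs_0 in Hlt. now rewrite (Rabs_pos_eq eps) in Hlt by lra.
Qed.

Section Logistic.

Variables (f g : R -> R) (k gamma a : R).
Hypothesis hk : 0 < k.
Hypothesis hgamma : 0 < gamma.
Hypothesis hderiv : forall t, a <= t -> is_derive f t (k * f t * (f t - gamma - g t)).
Hypothesis hpos : forall t, a <= t -> 0 < f t.
Hypothesis hg : is_lim g p_infty 0.

Let g_eventually_small eps :
  0 < eps -> exists T, a <= T /\ forall t, T <= t -> Rabs (g t) < eps.
Proof.
  intros Heps. destruct (proj1 (is_lim_p_infty_Rabs g 0) hg eps Heps) as [T HT].
  exists (Rmax a T). split; [apply Rmax_l|]. intros t Ht.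
  rewrite <- (Rminus_0_r (g t)). apply HT. eapply Rle_trans; [apply Rmax_r|exact Ht].
Qed.

Lemma logistic_limsup (B T0 : R) : (forall t, T0 <= t -> f t <= B) ->
  forall eps, 0 < eps -> exists T, forall t, T <= t -> f t <= gamma + eps.
Proof.
  intros HB eps Heps. destruct (g_eventually_small (eps / 2)) as [T [HaT Hg]]; [lra|].
  exists T. intros t Ht. apply Rnot_lt_le. intros Hlt.
  assert (Habove : forall u, t <= u -> gamma + eps < f u).
  { apply (stays_above f (fun u => k * f u * (f u - gamma - g u)) T); auto; try lra.
    - intros u Hu. apply hderiv. lra.
    - intros u Hu Hfu. pose proof (Hg u Hu) as Hgu. apply Rabs_def2 in Hgu.
      rewrite Hfu. apply Rmult_lt_0_compat; [apply Rmult_lt_0_compat|]; lra. }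
  assert (Hinf : is_lim f p_infty p_infty).
  { apply (is_lim_p_infty_of_derive_ge f (fun u => k * f u * (f u - gamma - g u))
             t (k * (gamma + eps) * (eps / 2))).
    - apply Rmult_lt_0_compat; [apply Rmult_lt_0_compat|]; lra.
    - intros u Hu. apply hderiv. lra.
    - intros u Hu. pose proof (Habove u ltac:(lra)).
      pose proof (Hg u ltac:(lra)) as Hgu. apply Rabs_def2 in Hgu.
      apply Rmult_le_compat; try lra.
      + apply Rmult_le_pos; lra.
      + apply Rmult_le_compat_l; lra. }
  rewrite is_lim_p_infty_p_infty in Hinf. destruct (Hinf B) as [T1 HT1].
  pose proof (HT1 (Rmax T0 T1) (Rmax_r _ _)). pose proof (HB (Rmax T0 T1) (Rmax_l _ _)).
  lra.
Qed.

Lemma logistic_extinction (eps T : R) : 0 < eps -> a <= T ->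
  (forall t, T <= t -> Rabs (g t) < eps / 2) -> f T < gamma - eps ->
  is_lim f p_infty 0.
Proof.
  intros Heps HaT Hg HfT.
  set (df u := k * f u * (f u - gamma - g u)).
  assert (Hd : forall u, T <= u -> is_derive f u (df u)) by (intros u Hu; apply hderiv; lra).
  assert (Hgap : forall u, T <= u -> f u - gamma - g u < - (eps / 2)).
  { intros u Hu. assert (Hbelow : f u < gamma - eps).
    { apply (stays_below f df T) with T; auto; try lra.
      intros v Hv Hfv. pose proof (Hg v Hv) as Hgv. apply Rabs_def2 in Hgv.
      pose proof (hpos v ltac:(lra)).
      assert (0 < k * f v * - (f v - gamma - g v)) by
        (apply Rmult_lt_0_compat; [apply Rmult_lt_0_compat|]; lra).
      unfold df. lra. }
    pose proof (Hg u Hu) as Hgu. apply Rabs_def2 in Hgu. lra. }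
  apply is_lim_p_infty_Rabs. intros eta Heta.
  destruct (eventually_below f df T eta (k * eta * (eps / 2))) as [T' HT'];
    [apply Rmult_lt_0_compat; [apply Rmult_lt_0_compat|]; lra|exact Hd| |].
  - intros u Hu Hfu. pose proof (Hgap u Hu).
    assert (k * eta * (eps / 2) <= k * f u * - (f u - gamma - g u)).
    { apply Rmult_le_compat; try lra.
      - apply Rmult_le_pos; lra.
      - apply Rmult_le_compat_l; lra. }
    unfold df. lra.
  - exists (Rmax T T'). intros t Ht.
    pose proof (HT' t (Rle_trans _ _ _ (Rmax_r _ _) Ht)).
    pose proof (hpos t ltac:(pose proof (Rmax_l T T'); lra)).
    rewrite Rminus_0_r, Rabs_pos_eq; lra.
Qed.

Lemma logistic_dichotomy : (exists B T0, forall t, T0 <= t -> f t <= B) ->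
  is_lim f p_infty 0 \/ is_lim f p_infty gamma.
Proof.
  intros [B [T0 HB]].
  destruct (classic (exists eps T, 0 < eps /\ a <= T /\
    (forall t, T <= t -> Rabs (g t) < eps / 2) /\ f T < gamma - eps))
    as [[eps [T [Heps [HaT [Hg HfT]]]]]|Hn].
  - left. exact (logistic_extinction eps T Heps HaT Hg HfT).
  - right. apply is_lim_p_infty_Rabs. intros eta Heta.
    destruct (logistic_limsup B T0 HB (eta / 2)) as [T1 HT1]; [lra|].
    destruct (g_eventually_small (eta / 4)) as [T2 [HaT2 Hg2]]; [lra|].
    exists (Rmax T1 T2). intros t Ht.
    pose proof (Rmax_l T1 T2). pose proof (Rmax_r T1 T2).
    assert (Hlow : gamma - eta / 2 <= f t).
    { apply Rnot_lt_le. intros Hlt. apply Hn. exists (eta / 2), t.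
      repeat split; try lra. intros u Hu. replace (eta / 2 / 2) with (eta / 4) by field.
      apply Hg2. lra. }
    pose proof (HT1 t ltac:(lra)). apply Rabs_def1; lra.
Qed.

End Logistic.

Lemma gamma0_pos (m sigma p : R) : 1 < m -> 0 < sigma -> m < p -> 0 < gamma0 m sigma p.
Proof.
  intros hm hsigma hpm. unfold gamma0, alpha_const, L_const.
  apply Rdiv_lt_0_compat; [lra|]. apply Rmult_lt_0_compat; [|lra].
  apply Rdiv_lt_0_compat; nra.
Qed.

Section S2_trajectory.

Variables (N m sigma p : R) (x y z : R -> R) (a : R).
Hypothesis hm : 1 < m.
Hypothesis hsigma : 0 < sigma.
Hypothesis hpm : m < p.
Hypothesis hsol : forall t, a <= t -> solves_S2_at N m sigma p x y z t.
Hypothesis hx0 : 0 < x a.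
Hypothesis hz0 : 0 < z a.
Hypothesis hy : forall t, a < t -> - ((sigma + 2) / (p - m)) < y t /\ y t < 0.

Let c := (p - m) / (sigma + 2).

Let hc : 0 < c.
Proof. unfold c. apply Rdiv_lt_0_compat; lra. Qed.

Lemma S2_cy_bounds t : a < t -> -1 < c * y t < 0.
Proof.
  intros Ht. destruct (hy t Ht) as [Hlo Hhi].
  assert (E : c * ((sigma + 2) / (p - m)) = 1) by (unfold c; field; lra).
  pose proof hc. nra.
Qed.

Lemma S2_x_pos t : a <= t -> 0 < x t.
Proof.
  apply (pos_of_is_derive_mul x (fun u => 2 - (m - 1) * y u)); auto.
  - intros u Hu. apply (hsol u Hu).
  - intros u Hu. destruct (hy u Hu). nra.
Qed.

Lemma S2_z_pos t : a <= t -> 0 < z t.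
Proof.
  apply (pos_of_is_derive_mul z (fun u => sigma + 2 + (p - m) * y u)); auto.
  - intros u Hu. apply (hsol u Hu).
  - intros u Hu. pose proof (S2_cy_bounds u Hu).
    assert (E : (p - m) * y u = (sigma + 2) * (c * y u)) by (unfold c; field; lra).
    nra.
Qed.

Lemma S2_x_to_p_infty : is_lim x p_infty p_infty.
Proof.
  set (dx u := x u * (2 - (m - 1) * y u)).
  assert (Hd : forall u, a <= u -> is_derive x u (dx u)) by (intros u Hu; apply (hsol u Hu)).
  assert (Hgrow : forall u, a < u -> 2 * x u <= dx u).
  { intros u Hu. destruct (hy u Hu). pose proof (S2_x_pos u ltac:(lra)).
    assert (0 <= x u * ((m - 1) * - y u)) by (apply Rmult_le_pos; [|apply Rmult_le_pos]; lra).
    unfold dx. lra. }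
  apply (is_lim_p_infty_of_derive_ge x dx a (2 * x a)); auto; [lra|].
  intros t Ht.
  assert (Hmono : x a + 0 * (t - a) <= x t).
  { apply (affine_le_of_derive_ge x dx); [lra| |].
    - intros u Hu. apply Hd. lra.
    - intros u Hu. pose proof (Hgrow u ltac:(lra)). pose proof (S2_x_pos u ltac:(lra)). lra. }
  pose proof (Hgrow t Ht). lra.
Qed.

Let Z t := z t / x t.
Let s t := sigma + (p - 1) * y t.
Let G t := Z t - 1 - c * y t.
Let K t := (1 + c * y t) * s t + c * (N - 2) * y t + c * m * y t ^ 2.

Lemma S2_Z_is_derive t : a <= t -> is_derive Z t (Z t * s t).
Proof.
  intros Ht. destruct (hsol t Ht) as [Hx [_ Hz]]. pose proof (S2_x_pos t Ht).
  replace (Z t * s t) with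
    ((S2_z m sigma p (x t) (y t) (z t) * x t - z t * S2_x m (x t) (y t) (z t)) / x t ^ 2).
  - apply is_derive_div; auto. lra.
  - unfold Z, s, S2_x, S2_z. field. lra.
Qed.

Lemma S2_G_is_derive t : a <= t -> is_derive G t (- (c * x t - s t) * G t + K t).
Proof.
  intros Ht. destruct (hsol t Ht) as [_ [Hy _]]. pose proof (S2_x_pos t Ht).
  pose proof (is_derive_minus Z (fun _ => 1) t _ _ (S2_Z_is_derive t Ht) (is_derive_const 1 t))
    as HZ1.
  pose proof (is_derive_minus _ _ t _ _ HZ1 (is_derive_scal y t c _ Hy)) as HG.
  replace (- (c * x t - s t) * G t + K t) with
    (minus (minus (Z t * s t) 0) (c * S2_y N m sigma p (x t) (y t) (z t))).
  - exact HG.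
  - unfold minus, plus, opp; simpl.
    unfold G, K, Z, s, S2_y, c. field. lra.
Qed.

Lemma S2_K_bound t : a < t -> Rabs (K t) <= sigma + (p - 1) / c + Rabs (N - 2) + m / c.
Proof.
  intros Ht. pose proof hc as Hc. pose proof (S2_cy_bounds t Ht) as Hu.
  set (u := c * y t) in *.
  set (w := (p - 1) / c). set (v := m / c).
  assert (Hw : 0 < w) by (unfold w; apply Rdiv_lt_0_compat; lra).
  assert (Hv : 0 < v) by (unfold v; apply Rdiv_lt_0_compat; lra).
  assert (E : K t = (1 + u) * sigma + (1 + u) * u * w + (N - 2) * u + u ^ 2 * v).
  { unfold K, s, u, w, v. field. lra. }
  rewrite E. apply Rabs_le.
  assert (Hn : - Rabs (N - 2) <= (N - 2) * u <= Rabs (N - 2)).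
  { destruct (Rcase_abs (N - 2)) as [Hneg|Hnn];
      [rewrite Rabs_left by lra|rewrite Rabs_pos_eq by lra]; split; nra. }
  assert (0 <= (1 + u) * sigma <= sigma) by (split; nra).
  assert (-1 <= (1 + u) * u <= 0) by (split; nra).
  assert (- w <= (1 + u) * u * w <= 0) by (split; nra).
  assert (0 <= u ^ 2 * v <= v) by (simpl; split; nra).
  split; lra.
Qed.

Lemma S2_G_to_0 : is_lim G p_infty 0.
Proof.
  apply (is_lim_0_of_damped G (fun t => c * x t - s t) K a
           (sigma + (p - 1) / c + Rabs (N - 2) + m / c)).
  - exact S2_G_is_derive.
  - exact S2_K_bound.
  - rewrite is_lim_p_infty_p_infty. pose proof S2_x_to_p_infty as Hx.
    rewrite is_lim_p_infty_p_infty in Hx. intros B.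
    destruct (Hx ((B + sigma) / c)) as [T HT].
    exists (Rmax (a + 1) T). intros t Ht.
    pose proof (HT t (Rle_trans _ _ _ (Rmax_r _ _) Ht)).
    destruct (hy t ltac:(pose proof (Rmax_l (a + 1) T); lra)).
    assert (E : c * ((B + sigma) / c) = B + sigma) by (field; pose proof hc; lra).
    pose proof hc. unfold s. nra.
Qed.

Lemma S2_Z_bounded : exists B T, forall t, T <= t -> Z t <= B.
Proof.
  destruct (proj1 (is_lim_p_infty_Rabs G 0) S2_G_to_0 1 Rlt_0_1) as [T HT].
  exists 2, (Rmax (a + 1) T). intros t Ht.
  pose proof (HT t (Rle_trans _ _ _ (Rmax_r _ _) Ht)) as HG. apply Rabs_def2 in HG.
  pose proof (S2_cy_bounds t ltac:(pose proof (Rmax_l (a + 1) T); lra)).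
  unfold G in HG. lra.
Qed.

Lemma S2_Z_is_derive_logistic t : a <= t ->
  is_derive Z t ((p - 1) / c * Z t * (Z t - gamma0 m sigma p - G t)).
Proof.
  intros Ht. replace ((p - 1) / c * Z t * (Z t - gamma0 m sigma p - G t)) with (Z t * s t).
  - exact (S2_Z_is_derive t Ht).
  - unfold s, G, gamma0, alpha_const, L_const, c. field. repeat split; nra.
Qed.

Lemma S2_X_to_0 : is_lim (fun t => 1 / x t) p_infty 0.
Proof.
  apply (is_lim_div_p_infty (fun _ => 1) x 1); [|exact S2_x_to_p_infty].
  exists a. intros t _. rewrite Rabs_R1. lra.
Qed.

Lemma S2_Y_to_0 : is_lim (fun t => y t / x t) p_infty 0.
Proof.
  apply (is_lim_div_p_infty y x ((sigma + 2) / (p - m))); [|exact S2_x_to_p_infty].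
  exists (a + 1). intros t Ht. destruct (hy t ltac:(lra)).
  rewrite Rabs_left by lra. lra.
Qed.

Lemma S2_Z_to_0_or_gamma0 : is_lim Z p_infty 0 \/ is_lim Z p_infty (gamma0 m sigma p).
Proof.
  apply (logistic_dichotomy Z G ((p - 1) / c) (gamma0 m sigma p) a).
  - pose proof hc. apply Rdiv_lt_0_compat; lra.
  - now apply gamma0_pos.
  - exact S2_Z_is_derive_logistic.
  - intros t Ht. apply Rdiv_lt_0_compat; [apply S2_z_pos|apply S2_x_pos]; exact Ht.
  - exact S2_G_to_0.
  - exact S2_Z_bounded.
Qed.

End S2_trajectory.

Theorem lemma3p4 (N : nat) (m sigma p : R) (x y z : R -> R) (eta_s : R) :
  (1 <= N)%nat -> 1 < m -> 0 < sigma -> m < p ->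
  (forall t, eta_s <= t -> solves_S2_at (INR N) m sigma p x y z t) ->
  0 < x eta_s -> 0 < z eta_s ->
  (forall t, eta_s < t -> - ((sigma + 2) / (p - m)) < y t /\ y t < 0) ->
  (is_lim (fun t => 1 / x t) p_infty 0 /\
   is_lim (fun t => y t / x t) p_infty 0 /\
   is_lim (fun t => z t / x t) p_infty 0)
  \/
  (is_lim (fun t => 1 / x t) p_infty 0 /\
   is_lim (fun t => y t / x t) p_infty 0 /\
   is_lim (fun t => z t / x t) p_infty (gamma0 m sigma p)).
Proof.
  intros _ hm hsigma hpm hsol hx0 hz0 hy.
  pose proof (S2_X_to_0 _ _ _ _ x y z eta_s hm hsol hx0 hy) as hX.
  pose proof (S2_Y_to_0 _ _ _ _ x y z eta_s hm hsol hx0 hy) as hY.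
  destruct (S2_Z_to_0_or_gamma0 _ _ _ _ x y z eta_s hm hsigma hpm hsol hx0 hz0 hy)
    as [hZ|hZ]; [left|right]; auto.
Qed.
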